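(* Let $\ell\geq 1$ be an integer, $m=2\ell+1$, $u=(3^m+1)/2$ and $v=2\cdot 3^{\ell}+1$. Let $\pi$ be a generator of $\mathrm{GF}(3^m)^*$, and let $\mathcal{C}_{(u,v)}$ be the cyclic code of length $3^m-1$ over $\mathrm{GF}(3)$ with generator polynomial $m_u(x)m_v(x)$. Then $\pi^u$ and $\pi^v$ are not conjugate over $\mathrm{GF}(3)$, and $\mathcal{C}_{(u,v)}$ has parameters $[3^m-1,\,3^m-1-2m,\,4]$, i.e. it has dimension $3^m-1-2m$ and minimum Hamming distance exactly $4$. (In particular it is optimal: by the Sphere Packing bound no linear code over $\mathrm{GF}(3)$ of length $3^m-1$ and dimension $3^m-1-2m$ has minimum distance greater than $4$.)
   Context: $\mathrm{GF}(q)$ denotes the finite field with $q$ elements. For $0\le i\le 3^m-2$, $m_i(x)$ denotes the minimal polynomial of $\pi^i$ over $\mathrm{GF}(3)$. A cyclic code of length $n$ over $\mathrm{GF}(3)$ is identified with an ideal of $\mathrm{GF}(3)[x]/(x^n-1)$, and the code with generator polynomial $g(x)$ (a divisor of $x^n-1$) is the ideal $\langle g(x)\rangle$, i.e. the set of vectors $(c_0,\dots,c_{n-1})\in\mathrm{GF}(3)^n$ such that $g(x)$ divides $\sum_i c_ix^i$. Equivalently here, $\mathcal{C}_{(u,v)}=\{(c_0,\dots,c_{3^m-2})\in\mathrm{GF}(3)^{3^m-1}:\ \sum_i c_i\pi^{ui}=0,\ \sum_i c_i\pi^{vi}=0\}$. An $[n,k,d]$ code is a linear code of length $n$, dimension $k$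 and minimum Hamming distance $d$. *)

From HB Require Import structures.
From mathcomp Require Import all_boot all_order all_algebra all_field.
Set Implicit Arguments. Unset Strict Implicit. Unset Printing Implicit Defensive.
Import GRing.Theory.
Local Open Scope ring_scope.

(* Elements of GF(3) are 'F_3; they are cast into F (a field of characteristic 3)
   via their natural-number representative, which is the prime-field embedding. *)
Definition f3toF (F : finFieldType) (a : 'F_3) : F := (a : nat)%:R.

Definition conjugate3 (F : finFieldType) (x y : F) : Prop :=
  exists j : nat, y = x ^+ (3 ^ j).

Definition code_uv (F : finFieldType) (n : nat) (pi : F) (u v : nat)
  : {set 'rV['F_3]_n} :=
  [set c : 'rV['F_3]_n |
     (\sum_(i < n) f3toF F (c ord0 i) * pi ^+ (u * i) == 0) &&
     (\sum_(i < n) f3toF F (c ord0 i) * pi ^+ (v * i) == 0)].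

Definition code_dim (n : nat) (C : {set 'rV['F_3]_n}) : nat :=
  \dim <<enum C>>%VS.

Definition hamming (n : nat) (c d : 'rV['F_3]_n) : nat :=
  #|[set i : 'I_n | c ord0 i != d ord0 i]|.

Definition min_dist_is (n : nat) (C : {set 'rV['F_3]_n}) (dd : nat) : Prop :=
  (exists c d, [/\ c \in C, d \in C, c != d & hamming c d = dd]) /\
  (forall c d, c \in C -> d \in C -> c != d -> (dd <= hamming c d)%N).

From HB Require Import structures.
From mathcomp Require Import all_boot all_order all_fingroup all_algebra all_field.
From mathcomp Require Import ring zify.
Set Implicit Arguments. Unset Strict Implicit. Unset Printing Implicit Defensive.
Import GRing.Theory.
Local Open Scope ring_scope.

(** Let q = 3^l and h = (3^m - 1)/2, which is odd.  Then pi^h = -1, so pi^u = -pi, and the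
    quadratic character x |-> x^h, which commutes with the Frobenius, equals 1 on pi^u and -1
    on pi^v: the two are not conjugate.

    With A_i = c_i pi^(u i), a codeword of weight w <= 3 gives nonzero A_i with sum A_i = 0
    and sum (-1)^i A_i^v = 0, where x^v = x (x^q)^2 and x |-> x^q is additive.  For w = 2
    this forces pi^j = -pi^i with i, j of equal parity, against the quadratic character.  For
    w = 3, equal signs force A_1 = A_2 = A_3, impossible at distinct positions, while mixed
    signs lead to r r^q = r^(2q) - 1 for some r; then r^2 is a root of the irreducible cubic
    y^3 + y^2 - 1, so r lies in GF(27), and each residue of l modulo 3 is contradictory.  A
    word of weight at most 4 exists by pigeonhole: the 2n(n-1) words of weight 2 outnumber
    the (n+1)^2 syndromes.

    The syndrome map is GF(3)-linear and onto GF(3^m)^2: pi^u and pi^v both generate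
    GF(3^m) and pi^v is not a root of the minimal polynomial mu of pi^u, so any pair of values
    is taken at (pi^u, pi^v) by a polynomial P + mu Q, reduced modulo X^n - 1.  Rank-nullity
    then gives the dimension n - 2m. *)

Section Char3.
Variable F : fieldType.
Hypothesis charF : 3%N \in [pchar F].

(* Identities modulo 3 are checked by [ring] after exhibiting the multiple of 3. *)
Lemma mod3_eq0 (P H K M : F) : H = 0 -> P = H * K + 3%:R * M -> P = 0.
Proof. by move=> -> ->; rewrite (pcharf0 charF) !mul0r addr0. Qed.

Lemma mod3_eq0_2 (P H1 H2 K1 K2 M : F) : H1 = 0 -> H2 = 0 ->
  P = H1 * K1 + H2 * K2 + 3%:R * M -> P = 0.
Proof. by move=> -> -> ->; rewrite (pcharf0 charF) !mul0r !addr0. Qed.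

Lemma mod3_eq (x y H K M : F) : H = 0 -> x - y = H * K + 3%:R * M -> x = y.
Proof. by move=> H0 e; apply/eqP; rewrite -subr_eq0 (mod3_eq0 H0 e). Qed.

Lemma pnat_3exp k : [pchar F].-nat (3 ^ k)%N.
Proof. by rewrite (eq_pnat _ (pcharf_eq charF)) pnatX pnat_id. Qed.

Lemma frob3D k (x y : F) : (x + y) ^+ (3 ^ k) = x ^+ (3 ^ k) + y ^+ (3 ^ k).
Proof. exact/exprDn_pchar/pnat_3exp. Qed.

Lemma frob3N k (x : F) : (- x) ^+ (3 ^ k) = - x ^+ (3 ^ k).
Proof. exact/exprNn_pchar/pnat_3exp. Qed.

Lemma frob3B k (x y : F) : (x - y) ^+ (3 ^ k) = x ^+ (3 ^ k) - y ^+ (3 ^ k).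
Proof. by rewrite frob3D frob3N. Qed.

Lemma frob3_inj k : injective (fun x : F => x ^+ (3 ^ k)).
Proof.
move=> x y /= e; apply/eqP; rewrite -subr_eq0.
have : (x - y) ^+ (3 ^ k) == 0 by rewrite frob3B e subrr.
by rewrite expf_eq0 expn_gt0.
Qed.

Definition is_sign (e : F) := e = 1 \/ e = -1.

Lemma sign_neq0 e : is_sign e -> e != 0.
Proof. by case=> ->; rewrite ?oppr_eq0 oner_eq0. Qed.

Lemma signM e f : is_sign e -> is_sign f -> is_sign (e * f).
Proof.
by case=> -> [] ->; rewrite ?mulr1 ?mul1r ?mulrNN ?mulr1 ?mulN1r; [left | right | right | left].
Qed.

Lemma sign_sqr e : is_sign e -> e * e = 1.
Proof. by case=> ->; rewrite ?mulr1 ?mulrNN ?mulr1. Qed.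

Lemma sign_exp e k : is_sign e -> odd k -> e ^+ k = e.
Proof. by case=> -> ok; rewrite ?expr1n // -signr_odd ok expr1. Qed.

Lemma signr_is_sign k : is_sign ((-1 : F) ^+ k).
Proof. by rewrite -signr_odd; case: (odd k); [right; rewrite expr1 | left]. Qed.

Lemma sign_eqVopp e f : is_sign e -> is_sign f -> e = f \/ e = - f.
Proof. by case=> -> [] ->; rewrite ?opprK; [left|right|right|left]. Qed.

Lemma sign_pigeonhole e1 e2 e3 : is_sign e1 -> is_sign e2 -> is_sign e3 ->
  [\/ e1 = e2, e1 = e3 | e2 = e3].
Proof. by case=> -> [] -> [] ->; (try by constructor 1); (try by constructor 2); constructor 3. Qed.

Lemma sign_neq_opp e : is_sign e -> e != - e.
Proof.
move=> se; apply/eqP => E; move/eqP: (sign_neq0 se); apply.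
by apply: (mod3_eq0 (H := e + e) (K := -1) (M := e)); [rewrite {2}E subrr | ring].
Qed.

End Char3.

Lemma expr_3exp_mod3 (R : pzRingType) (r : R) k :
  r ^+ 27 = r -> r ^+ (3 ^ k) = r ^+ (3 ^ (k %% 3)).
Proof.
move=> r27; have r27j j : r ^+ (27 ^ j) = r.
  by elim: j => [|j IH]; rewrite ?expr1 // expnSr exprM IH r27.
by rewrite {1}(divn_eq k 3) expnD [(_ * 3)%N]mulnC expnM exprM r27j.
Qed.

(* y^3 + y^2 - 1 is irreducible over GF(3), and y^13 - 1 is a multiple of it modulo 3. *)
Lemma cubic_root_exp27 (F : fieldType) (charF : 3%N \in [pchar F]) (r : F) :
  (r ^+ 2) ^+ 3 + (r ^+ 2) ^+ 2 - 1 = 0 -> r ^+ 27 = r.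
Proof.
set y := r ^+ 2 => cubic.
have y13 : y ^+ 13 - 1 = 0.
  apply: (mod3_eq0 charF (M := 1 - y - y ^+ 2) cubic
    (K := 4%:R - 3%:R * y + y ^+ 2 + y ^+ 3 - 2%:R * y ^+ 4 + 2%:R * y ^+ 5 - y ^+ 6
          + y ^+ 8 - y ^+ 9 + y ^+ 10)).
  ring.
by rewrite -[27%N]/(2 * 13).+1%N exprS exprM -/y (subr0_eq y13) mulr1.
Qed.

Section PowerSums.
Variable F : fieldType.
Hypothesis charF : 3%N \in [pchar F].
Variable l : nat.
Hypothesis frobF : forall x : F, x ^+ (3 ^ (2 * l + 1)) = x.
Local Notation q := (3 ^ l)%N.
Local Notation v := (2 * 3 ^ l + 1)%N.

Lemma odd_v : odd v. Proof. by rewrite addn1 /= oddM. Qed.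

Lemma expr_v (x : F) : x ^+ v = x * (x ^+ q) ^+ 2.
Proof. by rewrite exprD expr1 mulnC exprM mulrC. Qed.

Lemma exprN_v (x : F) : (- x) ^+ v = - x ^+ v.
Proof. by rewrite exprNn -signr_odd odd_v expr1 mulN1r. Qed.

Lemma frob_fixed_cube (x : F) : x ^+ q = x -> x ^+ 3 = x.
Proof.
move=> xq; have xq2 : x ^+ (3 ^ (2 * l)) = x by rewrite mul2n -addnn expnD exprM xq xq.
by rewrite -{2}(frobF x) addn1 expnSr exprM xq2.
Qed.

Lemma cube_fixed (t : F) : t ^+ 3 = t -> [\/ t = 0, t = 1 | t = -1].
Proof.
move=> t3; have : t * (t - 1) * (t + 1) = 0.
  by rewrite -[RHS](subrr t) -{4}t3; ring.
move/eqP; rewrite !mulf_eq0 subr_eq0 addr_eq0 => /orP[/orP[]|] /eqP ->;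
by [constructor 1 | constructor 2 | constructor 3].
Qed.

(* Expanding with x ^+ v = x (x^q)^2 and the additive map x |-> x^q, the power sum
   factors as (B^q - A^q) (A B^q - B A^q); in the second case A/B is fixed by x |-> x^q,
   hence lies in GF(3) since m is odd. *)
Lemma zero_sum_powv_eq (A B C : F) : A + B + C = 0 ->
  A != 0 -> B != 0 -> C != 0 -> A ^+ v + B ^+ v + C ^+ v = 0 -> A = B.
Proof.
move=> sum0 nA nB nC.
have CE : C = - (A + B) by apply/eqP; rewrite -addr_eq0 addrC sum0.
rewrite CE !expr_v frob3N // frob3D //; set P := A ^+ q; set Q := B ^+ q => E.
have : (Q - P) * (A * Q - B * P) = 0.
  by apply: (mod3_eq0 charF (K := -1) (M := - ((A + B) * P * Q)) E); ring.
move/eqP; rewrite mulf_eq0 !subr_eq0 => /orP[/eqP QP | /eqP AQ].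
  exact: (frob3_inj charF (k := l)).
have ratio_fixed : (A / B) ^+ q = A / B.
  rewrite exprMn exprVn -/P -/Q; apply/eqP.
  by rewrite eqr_div ?expf_neq0 // mulrC -AQ mulrC.
case: (cube_fixed (frob_fixed_cube ratio_fixed)) => /eqP.
- by rewrite mulf_eq0 invr_eq0 (negbTE nA) (negbTE nB).
- by move/eqP/divr1_eq.
- rewrite -(inj_eq (mulIf nB)) -mulrA mulVf // mulr1 mulNr mul1r => /eqP AB.
  by move: nC; rewrite CE AB addNr oppr0 eqxx.
Qed.

(* Raising r r^q = r^2q - 1 to the powers q and 3 and using r^(3^m) = r eliminates
   r^q, leaving a cubic equation for r^2. *)
Lemma frob_relation_cubic (r : F) : r * r ^+ q = (r ^+ q) ^+ 2 - 1 ->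
  (r ^+ 2) ^+ 3 + (r ^+ 2) ^+ 2 - 1 = 0.
Proof.
set s := r ^+ q => E1; set w := r ^+ (3 ^ (2 * l)).
have sw : s ^+ q = w by rewrite /s -exprM -expnD addnn -mul2n.
have w3 : w ^+ 3 = r by have := frobF r; rewrite addn1 expnSr exprM.
have E2 : s * w = w ^+ 2 - 1.
  by rewrite -sw -exprMn -exprAC -[1](expr1n _ q) -frob3B // -E1 exprMn.
set S := s ^+ 3.
have E2' : S * r = r ^+ 2 - 1.
  have := congr1 (fun x => x ^+ (3 ^ 1)) E2.
  by rewrite /= frob3B // expr1n expn1 exprMn exprAC w3.
have E1' : r ^+ 3 * S = S ^+ 2 - 1.
  have := congr1 (fun x => x ^+ (3 ^ 1)) E1.
  by rewrite /= frob3B // expr1n expn1 exprMn exprAC.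
have D : r ^+ 4 * (r ^+ 2 - 1) - ((r ^+ 2 - 1) ^+ 2 - r ^+ 2) = 0.
  rewrite -E2'; transitivity ((r ^+ 3 * S) * r ^+ 2 - (S ^+ 2 - 1) * r ^+ 2).
    by ring.
  by rewrite E1' subrr.
by apply: (mod3_eq0 charF (K := 1) (M := r ^+ 4 - r ^+ 2) D); ring.
Qed.

Lemma frob_relation_false (r : F) : r * r ^+ q = (r ^+ q) ^+ 2 - 1 -> False.
Proof.
move=> E; have cubic := frob_relation_cubic E.
have r27 := cubic_root_exp27 charF cubic.
move: E cubic; rewrite (expr_3exp_mod3 _ r27).
have one_neq0 : (1 : F) <> 0 by apply/eqP; rewrite oner_eq0.
set y := r ^+ 2; case: (l %% 3)%N (ltn_mod l 3) => [|[|[|//]]] _ /= E cubic; apply: one_neq0.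
- rewrite expn0 in E.
  by apply: (mod3_eq0 charF (K := 1) (M := 0) (subrr (r * r ^+ 1))); rewrite {2}E; ring.
- rewrite expn1 in E; have e : y ^+ 2 - y ^+ 3 + 1 = 0.
    by rewrite /y -[RHS](subrr (r * r ^+ 3)) {2}E; ring.
  by apply: (mod3_eq0_2 charF (K1 := - (y + 2%:R)) (K2 := - (y + 1))
    (M := (y + 1) * y ^+ 2) cubic e); ring.
- rewrite -[(3 ^ 2)%N]/9%N in E; have e : y ^+ 5 - y ^+ 9 + 1 = 0.
    by rewrite /y -[RHS](subrr (r * r ^+ 9)) {2}E; ring.
  have e2 : y ^+ 2 - 1 = 0.
    by apply: (mod3_eq0_2 charF (K2 := -1) (M := 1 - y)
      (K1 := 3%:R - 3%:R * y + 2%:R * y ^+ 2 - y ^+ 4 + y ^+ 5 - y ^+ 6) cubic e); ring.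
  by apply: (mod3_eq0_2 charF (K1 := y) (K2 := - (y * (y + 1)) - 1) (M := 0) cubic e2); ring.
Qed.

(* With r = (B - A) / C, the equation reduces to r r^q = r^2q - 1. *)
Lemma zero_sum_powv_neq (A B C : F) : A + B + C = 0 -> C != 0 ->
  A ^+ v + B ^+ v = C ^+ v -> False.
Proof.
move=> sum0 nC E0; set b := B - A.
have AE : A = C + b by apply: (mod3_eq charF (K := -1) (M := A) sum0); rewrite /b; ring.
have BE : B = C - b by apply: (mod3_eq charF (K := -1) (M := B) sum0); rewrite /b; ring.
have E : (C + b) ^+ v + (C - b) ^+ v - C ^+ v = 0 by rewrite -AE -BE E0 subrr.
rewrite !expr_v frob3D // frob3B // in E; set P := C ^+ q in E; set Q := b ^+ q in E.
have T : C * P ^+ 2 - C * Q ^+ 2 + b * P * Q = 0.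
  by apply: (mod3_eq0 charF (K := 1) (M := - (C * Q ^+ 2 + b * P * Q)) E); ring.
have nP : P != 0 by rewrite expf_neq0.
apply: (@frob_relation_false (b / C)); apply/eqP; rewrite -subr_eq0 exprMn exprVn -/P -/Q.
have -> : b / C * (Q / P) - ((Q / P) ^+ 2 - 1) =
          (C * P ^+ 2 - C * Q ^+ 2 + b * P * Q) / (C * P ^+ 2).
  by field; rewrite nC nP.
by rewrite T mul0r.
Qed.

Lemma signed_zero_sum_powv (A1 A2 A3 s1 s2 s3 : F) : A1 + A2 + A3 = 0 ->
  A1 != 0 -> A2 != 0 -> A3 != 0 -> is_sign s1 -> is_sign s2 -> is_sign s3 ->
  s1 * A1 ^+ v + s2 * A2 ^+ v + s3 * A3 ^+ v = 0 -> A1 = A2 /\ A1 = A3.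
Proof.
move=> sum0 nA1 nA2 nA3 s1E s2E s3E.
have all_eq : A1 ^+ v + A2 ^+ v + A3 ^+ v = 0 -> A1 = A2 /\ A1 = A3.
  move=> E; split; first exact: zero_sum_powv_eq E.
  apply: (zero_sum_powv_eq (C := A2)) => //; first by rewrite -[RHS]sum0; ring.
  by rewrite -[RHS]E; ring.
have mixed a b c : a + b + c = A1 + A2 + A3 -> c != 0 ->
    a ^+ v + b ^+ v - c ^+ v = 0 -> False.
  by move=> abc nc /subr0_eq; apply: zero_sum_powv_neq; rewrite ?abc.
case: s1E => ->; case: s2E => ->; case: s3E => -> E.
- by apply: all_eq; rewrite -[RHS]E; ring.
- by exfalso; apply: (mixed A1 A2 A3); [ring | | rewrite -[RHS]E; ring].
- by exfalso; apply: (mixed A1 A3 A2); [ring | | rewrite -[RHS]E; ring].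
- by exfalso; apply: (mixed A2 A3 A1); [ring | | rewrite -oppr0 -E; ring].
- by exfalso; apply: (mixed A2 A3 A1); [ring | | rewrite -[RHS]E; ring].
- by exfalso; apply: (mixed A1 A3 A2); [ring | | rewrite -oppr0 -E; ring].
- by exfalso; apply: (mixed A1 A2 A3); [ring | | rewrite -oppr0 -E; ring].
- by apply: all_eq; rewrite -oppr0 -E; ring.
Qed.
End PowerSums.

Section Exponents.
Variable l : nat.
Hypothesis l_gt0 : (0 < l)%N.
Local Notation m := (2 * l + 1)%N.
Local Notation n := (3 ^ m).-1.
Local Notation h := (n %/ 2)%N.

Lemma exp3_odd : (3 ^ m = 3 * 9 ^ l)%N.
Proof. by rewrite expnD expnM mulnC. Qed.

Lemma exp9_mod4 : (9 ^ l %% 4 = 1)%N.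
Proof. by rewrite -modnXm /= modn_small ?exp1n // ltnS exp1n. Qed.

Lemma exp9_ge9 : (9 <= 9 ^ l)%N.
Proof. by rewrite -{1}(expn1 9) leq_pexp2l. Qed.

Lemma n_double_half : n = (2 * h)%N.
Proof. rewrite exp3_odd; have := exp9_mod4; have := exp9_ge9; lia. Qed.

Lemma u_half_succ : ((3 ^ m + 1) %/ 2)%N = h.+1.
Proof. rewrite exp3_odd; have := exp9_mod4; have := exp9_ge9; lia. Qed.

Lemma odd_half : odd h.
Proof.
suff : (h %% 2 = 1)%N by rewrite modn2; case: (odd _).
by rewrite exp3_odd; have := exp9_mod4; have := exp9_ge9; lia.
Qed.

Lemma n_ge26 : (26 <= n)%N.
Proof. rewrite exp3_odd; have := exp9_ge9; lia. Qed.

Lemma exp3_lt_n d : (d < m)%N -> (3 ^ d < n)%N.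
Proof.
move=> dm; have : (3 ^ d <= 3 ^ (2 * l))%N by rewrite leq_pexp2l //; lia.
rewrite addn1 expnSr; have := expn_gt0 3 (2 * l); lia.
Qed.

Lemma proper_dvd_m_le d : (d %| m)%N -> (d < m)%N -> (d <= l)%N.
Proof.
case/dvdnP => k mE dm; have k3 : (3 <= k)%N by case: k mE => [|[|[|k]]] //=; lia.
have : (3 * d <= k * d)%N by rewrite leq_mul2r k3 orbT.
lia.
Qed.

Lemma n_ndvd_v_exp3 d : (0 < d)%N -> (d <= l)%N -> ~~ (n %| (2 * 3 ^ l + 1) * (3 ^ d).-1)%N.
Proof.
move=> d_gt0 dl; apply/negP => /dvdn_leq.
have : (3 ^ d <= 3 ^ l)%N by rewrite leq_pexp2l.
have : (3 <= 3 ^ d)%N by rewrite -{1}(expn1 3) leq_pexp2l.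
have m3 : (3 ^ m = 3 * 3 ^ l * 3 ^ l)%N by rewrite addn1 expnSr mul2n -addnn expnD; lia.
rewrite m3; have := expn_gt0 3 l; nia.
Qed.

End Exponents.


Definition supp n (c : 'rV['F_3]_n) := [set i | c ord0 i != 0].

Lemma hamming_supp n (c d : 'rV['F_3]_n) : hamming c d = #|supp (c - d)|.
Proof. by apply: eq_card => i; rewrite !inE !mxE subr_eq0. Qed.

Lemma supp0 n (c : 'rV['F_3]_n) : supp c = set0 -> c = 0.
Proof.
move=> c0; apply/rowP => i; rewrite mxE; apply/eqP.
have : i \notin supp c by rewrite c0 inE.
by rewrite inE negbK.
Qed.

Lemma supp_subB n (c d : 'rV['F_3]_n) : supp (c - d) \subset supp c :|: supp d.
Proof.
apply/subsetP => k; rewrite !inE !mxE; apply: contraR; rewrite negb_or !negbK.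
by case/andP => /eqP -> /eqP ->; rewrite subrr.
Qed.

Lemma cards3P (T : finType) (A : {set T}) : #|A| = 3 ->
  exists i j k, [/\ i != j, i != k, j != k & A = [set i; j; k]].
Proof.
move=> A3; have : (0 < #|A|)%N by rewrite A3.
case/card_gt0P => i iA; have : #|A :\ i| == 2 by move: A3; rewrite (cardsD1 i) iA add1n => -[->].
case/cards2P => j [k [jk Ai]].
have : (j \in A :\ i) && (k \in A :\ i) by rewrite Ai !inE !eqxx orbT.
rewrite !inE => /andP[/andP[ji _] /andP[ki _]].
exists i, j, k; split; rewrite 1?(eq_sym i) //.
by rewrite -(setD1K iA) Ai setUA.
Qed.

Lemma card_lt_pairs n : #|[set p : 'I_n * 'I_n | (p.1 < p.2)%N]| = 'C(n, 2).
Proof.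
rewrite -card_ltn_sorted_tuples.
pose f (p : 'I_n * 'I_n) := [tuple p.1; p.2].
have f_inj : injective f by move=> [a b] [c d] [-> ->].
rewrite -(card_imset _ f_inj); apply: eq_card => t; rewrite inE.
case/tupleP: t => a t; case/tupleP: t => b t; rewrite tuple0.
apply/imsetP/idP => [[[c d]] | ab]; first by rewrite inE => cd [-> ->] /=; rewrite andbT.
by exists (a, b); rewrite ?inE //=; move: ab => /= /andP[].
Qed.

Section Weight2Words.
Variable n : nat.

Definition sign3 (b : bool) : 'F_3 := if b then 1 else -1.

Definition weight2_word (p : ('I_n * 'I_n) * (bool * bool)) : 'rV['F_3]_n :=
  \row_k (if k == p.1.1 then sign3 p.2.1 else if k == p.1.2 then sign3 p.2.2 else 0).

Definition weight2_index := [set p : ('I_n * 'I_n) * (bool * bool) | (p.1.1 < p.1.2)%N].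

Lemma card_weight2_index : #|weight2_index| = ('C(n, 2) * 4)%N.
Proof.
have -> : weight2_index = setX [set p : 'I_n * 'I_n | (p.1 < p.2)%N] [set: bool * bool].
  by apply/setP => p; rewrite !inE andbT.
by rewrite cardsX card_lt_pairs cardsT card_prod card_bool.
Qed.

Lemma sign3_neq0 b : sign3 b != 0. Proof. by case: b. Qed.

Lemma sign3_inj : injective sign3. Proof. by do 2 case. Qed.

Lemma supp_weight2_word p : p \in weight2_index ->
  supp (weight2_word p) = [set p.1.1; p.1.2].
Proof.
case: p => [[i j] [a b]]; rewrite inE /= => ij; apply/setP => k; rewrite !inE mxE /=.
case: (k =P i) => [-> | _]; first by rewrite sign3_neq0.
by case: (k == j); rewrite ?sign3_neq0.
Qed.

Lemma weight2_word_inj : {in weight2_index &, injective weight2_word}.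
Proof.
move=> [[i j] [a b]] [[i' j'] [a' b']] pI p'I E.
have S := congr1 (@supp n) E; rewrite !supp_weight2_word // in S.
move: pI p'I; rewrite !inE /= => ij ij'.
have mem k : (k \in [set i; j]) = (k \in [set i'; j']) by rewrite S.
move: (mem i) (mem j) (mem i'); rewrite !inE !eqxx ?orbT -!(inj_eq (@ord_inj n)) /=.
move=> /esym hi /esym hj hi'.
have ei : i' = i by apply: ord_inj; lia.
have ej : j' = j by apply: ord_inj; lia.
subst i' j'.
have ji : j != i by rewrite neq_ltn ij orbT.
have := congr1 (fun c : 'rV_n => c ord0 i) E; have := congr1 (fun c : 'rV_n => c ord0 j) E.
by rewrite /= !mxE /= eqxx (negbTE ji) eqxx => /sign3_inj -> /sign3_inj ->.
Qed.

Lemma weight2_word_diff_le4 p p' : p \in weight2_index -> p' \in weight2_index ->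
  (#|supp (weight2_word p - weight2_word p')| <= 4)%N.
Proof.
move=> pI p'I; apply: leq_trans (subset_leq_card (supp_subB _ _)) _.
apply: leq_trans (leq_card_setU _ _) _.
by rewrite !supp_weight2_word // !cards2; do 2 case: (_ != _).
Qed.

End Weight2Words.

Section PrimeFieldExtension.
Variables (F : finFieldType) (p : nat) (charFp : p \in [pchar F]).
Local Notation L := (pPrimeCharType charFp).

Lemma card_prime_subfield : (#|'F_p| ^ \dim (1%VS : {vspace L}))%N = p.
Proof. by rewrite dimv1 card_Fp ?(pcharf_prime charFp). Qed.

Lemma adjoin_prime_full (x : L) :
  (forall d, (0 < d)%N -> (d %| \dim {: L})%N -> (d < \dim {: L})%N -> x ^+ (p ^ d) != x) ->
  <<1; x>>%VS = fullv.
Proof.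
move=> x_moved; pose K := <<1; x>>%AS.
have dK : (\dim K %| \dim {: L})%N by rewrite field_dimS // subvf.
have xK : x ^+ (p ^ \dim K) == x.
  by have := Fermat's_little_theorem K x; rewrite memv_adjoin /= card_Fp ?(pcharf_prime charFp).
have dim_full : (\dim {: L} <= \dim K)%N.
  rewrite leqNgt; apply/negP => lt.
  by move: xK; apply/negP; apply: x_moved => //; exact: adim_gt0.
by apply/eqP; rewrite eqEdim subvf.
Qed.

(* The Galois group of L over GF(p) is generated by the Frobenius automorphism. *)
Lemma root_minPoly_frob (y z : L) : root (minPoly 1 y) z -> exists j, z = y ^+ (p ^ j).
Proof.
move=> yz; have /and3P[_ _ normalL] := finField_galois (sub1v (fullv : {aspace L})).
have [x xG exy] := normalField_root_minPoly (sub1v _) normalL (memvf y) yz.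
have [frob gen frobE] := finField_galois_generator (sub1v (fullv : {aspace L})).
move: xG exy; rewrite (eqP gen) => /cycleP [j ->] <-; exists j.
elim: j => [|j IH]; first by rewrite expg0 gal_id expr1.
rewrite expgSr galM ?memvf // IH frobE ?memvf //= card_prime_subfield.
by rewrite -exprM expnSr.
Qed.

End PrimeFieldExtension.


Section Syndrome.
Variables (F : finFieldType) (charF : 3%N \in [pchar F]) (n : nat).
Local Notation L := (pPrimeCharType charF).

(* In [L], the scalar action of 'F_3 is multiplication by the image under [f3toF]. *)
Definition coord_comb (w : nat -> F) (c : 'rV['F_3]_n) : L :=
  \sum_(i < n) c ord0 i *: (w i : L).

Fact coord_comb_linear w : linear (coord_comb w).
Proof.
move=> a c d; rewrite /coord_comb scaler_sumr -big_split /=.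
by apply: eq_bigr => i _; rewrite !mxE scalerDl scalerA.
Qed.

HB.instance Definition _ w :=
  GRing.isLinear.Build 'F_3 'rV['F_3]_n L _ (coord_comb w) (coord_comb_linear w).

Definition syndrome (w1 w2 : nat -> F) (c : 'rV['F_3]_n) : L * L :=
  (coord_comb w1 c, coord_comb w2 c).

Fact syndrome_linear w1 w2 : linear (syndrome w1 w2).
Proof. by move=> a c d; rewrite /syndrome !linearP. Qed.

HB.instance Definition _ w1 w2 := GRing.isLinear.Build 'F_3 'rV['F_3]_n (L * L)%type _
  (syndrome w1 w2) (syndrome_linear w1 w2).

Lemma code_dim_kernel (C : {set 'rV['F_3]_n}) (f : 'Hom('rV['F_3]_n, (L * L)%type)) :
  C =i lker f -> code_dim C = \dim (lker f).
Proof.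
move=> CE; congr (\dim _); apply/eqP; rewrite eqEsubv; apply/andP; split.
  by apply/span_subvP => c; rewrite mem_enum CE.
by apply/subvP => c cf; apply: memv_span; rewrite mem_enum CE.
Qed.

Lemma code_dim_syndrome_onto w1 w2 :
  (forall a b : L, exists c, syndrome w1 w2 c = (a, b)) ->
  code_dim [set c | syndrome w1 w2 c == 0] = (n - 2 * \dim {: L})%N.
Proof.
move=> onto; set f := linfun (syndrome w1 w2).
have -> : code_dim [set c | syndrome w1 w2 c == 0] = \dim (lker f).
  by apply: code_dim_kernel => c; rewrite inE memv_ker lfunE.
have img : limg f = fullv.
  apply/eqP; rewrite eqEsubv subvf; apply/subvP => -[a b] _.
  by have [c cE] := onto a b; rewrite -cE -lfunE memv_img ?memvf.
have dim_row : \dim {: 'rV['F_3]_n} = n by rewrite dimvf /dim /= mul1n.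
have dim_pair : \dim {: (L * L)%type} = (2 * \dim {: L})%N by rewrite !dimvf mul2n -addnn.
by have := limg_ker_dim f fullv; rewrite capfv img dim_row dim_pair; lia.
Qed.

Definition prime_coord (x : L) : 'F_3 := odflt 0 [pick a : 'F_3 | a *: 1 == x].

Lemma prime_coordK (x : L) : x \in 1%VS -> prime_coord x *: 1 = x.
Proof.
case/vlineP => k ->; rewrite /prime_coord; case: pickP => [a /eqP // | /(_ k)].
by rewrite eqxx.
Qed.

(* Reduce P modulo X^n - 1 and read off its coefficients. *)
Lemma coord_comb_poly (P : {poly L}) : (0 < n)%N -> P \is a polyOver 1%VS -> exists c : 'rV['F_3]_n,
  forall x : L, x ^+ n = 1 -> coord_comb (fun i => x ^+ i) c = P.[x].
Proof.
move=> n_gt0 PO; pose D : {poly L} := 'X^n - 1; pose R := P %% D.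
have RO : R \is a polyOver 1%VS by rewrite modp_polyOver // rpredB ?rpredX ?polyOverX ?rpred1.
have sR : (size R <= n)%N.
  have sD : size D = n.+1 by rewrite /D -polyC1 size_XnsubC.
  by rewrite -ltnS -sD ltn_modp -size_poly_eq0 sD.
exists (\row_(i < n) prime_coord R`_i) => x xn.
have -> : P.[x] = R.[x].
  by rewrite {1}(divp_eq P D) hornerD hornerM /D !hornerE xn subrr mulr0 add0r.
rewrite (horner_coef_wide _ sR); apply: eq_bigr => i _.
have Ri : R`_i \in 1%VS by move/polyOverP: RO.
by rewrite mxE -{2}(prime_coordK Ri) -scalerAl mul1r.
Qed.

(* Interpolation: since z is not a root of the minimal polynomial mu of y, a polynomial
   P + mu Q takes any prescribed values at y and z. *)
Lemma syndrome_onto (y z : L) : (0 < n)%N -> y ^+ n = 1 -> z ^+ n = 1 ->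
  <<1; y>>%VS = fullv -> <<1; z>>%VS = fullv -> ~~ root (minPoly 1 y) z ->
  forall a b : L, exists c, syndrome (fun i => y ^+ i) (fun i => z ^+ i) c = (a, b).
Proof.
move=> n_gt0 yn zn y_full z_full z_root a b; set mu := minPoly 1 y.
have [P PO aE] : exists2 P, P \is a polyOver 1%VS & a = P.[y].
  by apply/Fadjoin_polyP; rewrite y_full memvf.
have [Q QO bE] : exists2 Q, Q \is a polyOver 1%VS & (b - P.[z]) / mu.[z] = Q.[z].
  by apply/Fadjoin_polyP; rewrite z_full memvf.
have [c cE] := coord_comb_poly n_gt0 (rpredD PO (rpredM (minPolyOver 1 y) QO)).
exists c; rewrite /syndrome !cE // !hornerD !hornerM minPolyxx mul0r addr0 -aE -bE.
by rewrite mulrC divfK // addrC subrK.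
Qed.

End Syndrome.

Section Code.
Variables (l : nat) (F : finFieldType) (pi : F).
Hypothesis l_gt0 : (0 < l)%N.
Hypothesis cardF : #|F| = (3 ^ (2 * l + 1))%N.
Hypothesis pi_prim : (3 ^ (2 * l + 1)).-1.-primitive_root pi.
Local Notation m := (2 * l + 1)%N.
Local Notation n := (3 ^ m).-1.
Local Notation u := ((3 ^ m + 1) %/ 2)%N.
Local Notation v := (2 * 3 ^ l + 1)%N.
Local Notation h := (n %/ 2)%N.
Local Notation C := (code_uv n pi u v).

Lemma charF3 : 3%N \in [pchar F].
Proof. exact: card_finPcharP cardF isT. Qed.

Lemma frobF (x : F) : x ^+ (3 ^ m) = x.
Proof. by rewrite -cardF expf_card. Qed.

Local Notation L := (pPrimeCharType charF3).
Local Notation syn := (@syndrome _ charF3 n (fun i => (pi ^+ u) ^+ i) (fun i => (pi ^+ v) ^+ i)).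

Lemma exp_pi_n : pi ^+ n = 1. Proof. exact: prim_expr_order pi_prim. Qed.

Lemma exp_pi_neq0 k : pi ^+ k != 0.
Proof.
apply: expf_neq0; apply/eqP => pi0; move: exp_pi_n.
by rewrite pi0 expr0n; have := n_ge26 l_gt0; case: n => // k' _ /eqP; rewrite eq_sym oner_eq0.
Qed.

Lemma exp_pi_inj i j : (i < n)%N -> (j < n)%N -> pi ^+ i = pi ^+ j -> i = j.
Proof.
move=> ilt jlt /eqP; rewrite (eq_prim_root_expr pi_prim) !modn_small //.
by move/eqP.
Qed.

Lemma exp_pi_half : pi ^+ h = -1.
Proof.
have nE := n_double_half l_gt0.
have sq1 : (pi ^+ h) ^+ 2 = 1 by rewrite -exprM mulnC -nE exp_pi_n.
have : (pi ^+ h - 1) * (pi ^+ h + 1) = 0.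
  by rewrite -[RHS](subrr 1) -{3}sq1; ring.
move/eqP; rewrite mulf_eq0 subr_eq0 addr_eq0 => /orP[/eqP pih1|/eqP //].
have : (n %| h)%N by rewrite (prim_order_dvd pi_prim) pih1.
by move/dvdn_leq; have := n_ge26 l_gt0; rewrite nE; lia.
Qed.

Lemma exp_pi_u : pi ^+ u = - pi.
Proof. by rewrite (u_half_succ l_gt0) exprSr exp_pi_half mulN1r. Qed.

Lemma quad_char_exp_pi k : (pi ^+ k) ^+ h = (-1) ^+ k.
Proof. by rewrite exprAC exp_pi_half. Qed.

Lemma exp_pi_eq_opp i j : pi ^+ j = - pi ^+ i -> (-1) ^+ j = - (-1 : F) ^+ i.
Proof.
move=> E; have := congr1 (fun x => x ^+ h) E.
rewrite /= quad_char_exp_pi (exprNn (pi ^+ i)) quad_char_exp_pi.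
by rewrite -[(-1 : F) ^+ h]signr_odd (odd_half l_gt0) expr1 mulN1r.
Qed.

Lemma not_conjugate_uv : ~ conjugate3 (pi ^+ u) (pi ^+ v).
Proof.
case=> j E; have := congr1 (fun x => x ^+ h) E.
have -> : ((pi ^+ u) ^+ (3 ^ j)) ^+ h = 1.
  rewrite exprAC exp_pi_u exprNn exp_pi_half -signr_odd (odd_half l_gt0).
  by rewrite expr1 mulrNN mulr1 expr1n.
rewrite /= quad_char_exp_pi -signr_odd odd_v expr1 => /eqP.
by apply/negP; rewrite -[X in _ != X]opprK; apply: (sign_neq_opp charF3); right.
Qed.

Lemma code_uvE : C = [set c | syn c == 0].
Proof.
apply/setP => c; rewrite !inE.
have E k : \sum_(i < n) f3toF F (c ord0 i) * pi ^+ (k * i) =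
           coord_comb charF3 (fun i => (pi ^+ k) ^+ i) c.
  by apply: eq_bigr => i _; rewrite exprM.
by rewrite !E.
Qed.

Lemma code_uvB c d : c \in C -> d \in C -> c - d \in C.
Proof. by rewrite code_uvE !inE => /eqP cE /eqP dE; rewrite linearB /= cE dE subrr. Qed.

Lemma f3toF_sign (a : 'F_3) : a != 0 -> is_sign (f3toF F a).
Proof.
case: a => [[|[|[|k]]] a_lt3] //= _; rewrite /f3toF /=; first by left.
by right; apply: (mod3_eq charF3 (H := 0) (K := 0) (M := 1)) => //; ring.
Qed.

(* The substitution A_i = c_i (-1)^i pi^i = c_i pi^(u i) turns the two parity checks into
   sum_i A_i = 0 and sum_i (-1)^i A_i^v = 0. *)
Definition signed_coef (c : 'rV['F_3]_n) (i : 'I_n) : F := f3toF F (c ord0 i) * (-1) ^+ i.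

Lemma signed_coef_sign c i : i \in supp c -> is_sign (signed_coef c i).
Proof. by rewrite inE => ci; apply: signM; [exact: f3toF_sign | exact: signr_is_sign]. Qed.

Lemma code_uv_sums c : c \in C ->
  \sum_(i in supp c) signed_coef c i * pi ^+ i = 0 /\
  \sum_(i in supp c) (-1) ^+ i * (signed_coef c i * pi ^+ i) ^+ v = 0.
Proof.
rewrite inE => /andP[/eqP Su /eqP Sv].
have on_supp k : \sum_(i < n) f3toF F (c ord0 i) * pi ^+ (k * i) =
                 \sum_(i in supp c) f3toF F (c ord0 i) * pi ^+ (k * i).
  rewrite [LHS](bigID (mem (supp c))) /= [X in _ + X]big1 ?addr0 // => i.
  by rewrite inE negbK => /eqP ->; rewrite [f3toF F 0]/(0%:R) mul0r.
split; [rewrite -[RHS]Su on_supp | rewrite -[RHS]Sv on_supp]; apply: eq_bigr => i ci.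
  by rewrite /signed_coef -mulrA -exprMn mulN1r exprM exp_pi_u.
rewrite exprMn (sign_exp (signed_coef_sign ci) (odd_v l)) -exprM [(_ * v)%N]mulnC.
by rewrite /signed_coef [_ * (-1) ^+ i]mulrC -mulrA signrMK.
Qed.

Lemma exp_pi_ord_neq (i j : 'I_n) : i != j -> pi ^+ i != pi ^+ j.
Proof. by apply: contraNneq => /(exp_pi_inj (ltn_ord i) (ltn_ord j)) /ord_inj ->. Qed.

Lemma signed_term_neq0 c i : i \in supp c -> signed_coef c i * pi ^+ i != 0.
Proof.
move=> ci; rewrite mulf_neq0 ?exp_pi_neq0 //.
exact: sign_neq0 (signed_coef_sign ci).
Qed.

Lemma code_uv_supp_neq1 c i : c \in C -> supp c != [set i].
Proof.
case/code_uv_sums => S _; apply/eqP => ci; move/eqP: S; rewrite ci big_set1.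
by apply/negP/signed_term_neq0; rewrite ci set11.
Qed.

Lemma code_uv_supp_neq2 c i j : c \in C -> i != j -> supp c != [set i; j].
Proof.
case/code_uv_sums => Su Sv ij; apply/eqP => cij.
have [ci cj] : i \in supp c /\ j \in supp c by rewrite cij !inE !eqxx orbT.
move: Su Sv; rewrite cij !big_setU1 ?inE // !big_set1 /=.
set ei := signed_coef c i; set ej := signed_coef c j.
move=> /eqP; rewrite addr_eq0 => /eqP Ej.
rewrite Ej exprN_v mulrN addrC -mulrBl => /eqP.
rewrite mulf_eq0 expf_eq0 (negbTE (signed_term_neq0 cj)) andbF orbF subr_eq0 => /eqP sji.
have ei_neq0 : ei != 0 by apply: sign_neq0; apply: signed_coef_sign.
have [] : ej = ei \/ ej = - ei := sign_eqVopp (signed_coef_sign cj) (signed_coef_sign ci).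
all: move=> eji; move: Ej; rewrite eji.
- rewrite -mulrN => /(mulfI ei_neq0) /exp_pi_eq_opp.
  by rewrite sji => /eqP; apply/negP; apply: (sign_neq_opp charF3); apply: signr_is_sign.
- rewrite mulNr opprK => /(mulfI ei_neq0) /eqP.
  by apply/negP/exp_pi_ord_neq.
Qed.

Lemma code_uv_supp_neq3 c i j k : c \in C -> i != j -> i != k -> j != k ->
  supp c != [set i; j; k].
Proof.
case/code_uv_sums => Su Sv ij ik jk; apply/eqP => cijk.
have [ci cj ck] : [/\ i \in supp c, j \in supp c & k \in supp c].
  by rewrite cijk !inE !eqxx ?orbT.
move: Su Sv; rewrite cijk -setUA !big_setU1 ?inE ?negb_or ?ij ?ik ?jk // !big_set1 /= !addrA.
move=> Su Sv.
have [Eij Eik] := signed_zero_sum_powv charF3 frobF Su (signed_term_neq0 ci)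
  (signed_term_neq0 cj) (signed_term_neq0 ck) (signr_is_sign _ i) (signr_is_sign _ j)
  (signr_is_sign _ k) Sv.
have cancel a b (e e' : F) : is_sign e -> e = e' -> e * pi ^+ a = e' * pi ^+ b -> pi ^+ a = pi ^+ b.
  by move=> es <-; apply: mulfI; apply: sign_neq0.
case: (sign_pigeonhole (signed_coef_sign ci) (signed_coef_sign cj) (signed_coef_sign ck)) => E.
- by move/eqP: (cancel _ _ _ _ (signed_coef_sign ci) E Eij); apply/negP/exp_pi_ord_neq.
- by move/eqP: (cancel _ _ _ _ (signed_coef_sign ci) E Eik); apply/negP/exp_pi_ord_neq.
- have Ejk : signed_coef c j * pi ^+ j = signed_coef c k * pi ^+ k by rewrite -Eij -Eik.
  by move/eqP: (cancel _ _ _ _ (signed_coef_sign cj) E Ejk); apply/negP/exp_pi_ord_neq.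
Qed.

Lemma code_uv_weight_ge4 c : c \in C -> c != 0 -> (4 <= #|supp c|)%N.
Proof.
move=> cC c0; rewrite leqNgt; apply/negP => lt4.
have : (#|supp c| \in [:: 0; 1; 2; 3])%N by move: lt4; case: #|supp c| => [|[|[|[|]]]].
rewrite !inE => /or4P[/eqP/cards0_eq/supp0 | /cards1P[i ci] | /cards2P[i [j [ij cij]]] |
                      /eqP/cards3P[i [j [k [ij ik jk cijk]]]]].
- by move=> c_0; move: c0; rewrite c_0 eqxx.
- by move/eqP: ci; apply/negP/code_uv_supp_neq1.
- by move/eqP: cij; apply/negP/code_uv_supp_neq2.
- by move/eqP: cijk; apply/negP/code_uv_supp_neq3.
Qed.

(* Pigeonhole: the 4 'C(n, 2) words of weight 2 outnumber the (n + 1)^2 syndromes. *)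
Lemma exists_code_uv_weight_le4 : exists c, [/\ c \in C, c != 0 & (#|supp c| <= 4)%N].
Proof.
pose g p := syn (weight2_word p).
have [/dinjectiveP g_inj | /dinjectivePn [p pI [p' /andP[p'p p'I] Eg]]] :=
  boolP (dinjectiveb g (weight2_index n)).
  exfalso; have := max_card (g @: weight2_index n).
  rewrite (card_in_imset g_inj) card_weight2_index card_prod bin2.
  have -> : #|L| = n.+1 by rewrite [#|L|]cardF prednK ?expn_gt0.
  have := odd_double_half (n * n.-1); have := n_ge26 l_gt0; have := leq_b1 (odd (n * n.-1)).
  nia.
exists (weight2_word p - weight2_word p'); split.
- by rewrite code_uvE inE linearB /= -!/(g _) Eg subrr.
- by rewrite subr_eq0; apply: contra p'p => /eqP /(weight2_word_inj pI p'I) ->.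
- exact: weight2_word_diff_le4.
Qed.

Lemma dim_L : \dim {: L} = m.
Proof. by rewrite pprimeChar_dimf [#|L|]cardF pfactorK. Qed.

Lemma frob_exp_pi_u_neq d : (0 < d)%N -> (d < m)%N -> (pi ^+ u) ^+ (3 ^ d) != pi ^+ u.
Proof.
move=> d_gt0 dm; have n_gt1 : (1 < n)%N by have := n_ge26 l_gt0; lia.
rewrite exp_pi_u (frob3N charF3); apply/eqP => /oppr_inj.
rewrite -{2}(expr1 pi) => /(exp_pi_inj (exp3_lt_n l_gt0 dm) n_gt1) /eqP.
by rewrite -[1%N](expn0 3) eqn_exp2l // eqn0Ngt d_gt0.
Qed.

Lemma frob_exp_pi_v_neq d : (0 < d)%N -> (d %| m)%N -> (d < m)%N ->
  (pi ^+ v) ^+ (3 ^ d) != pi ^+ v.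
Proof.
move=> d_gt0 dvd_dm dm; apply/eqP => E.
move/negP: (n_ndvd_v_exp3 l_gt0 d_gt0 (proper_dvd_m_le l_gt0 dvd_dm dm)).
rewrite (prim_order_dvd pi_prim) exprM; apply; apply/eqP; apply: (mulIf (exp_pi_neq0 v)).
by rewrite mul1r -exprSr prednK ?expn_gt0.
Qed.

Lemma syndrome_code_uv_onto (a b : L) : exists c, syn c = (a, b).
Proof.
have n_gt0 : (0 < n)%N by have := n_ge26 l_gt0; lia.
have full (x : L) : (forall d, (0 < d)%N -> (d %| m)%N -> (d < m)%N -> x ^+ (3 ^ d) != x) ->
    <<1; x>>%VS = fullv.
  by move=> x_moved; apply: adjoin_prime_full => d; rewrite dim_L; exact: x_moved.
have exp_n k : (pi ^+ k) ^+ n = 1 by rewrite exprAC exp_pi_n expr1n.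
apply: (@syndrome_onto _ charF3 n) => //.
- by apply: full => d d_gt0 _; exact: frob_exp_pi_u_neq.
- by apply: full; exact: frob_exp_pi_v_neq.
- by apply/negP => /root_minPoly_frob [j E]; apply: not_conjugate_uv; exists j.
Qed.

Lemma code_uv_dim : code_dim C = (n - 2 * m)%N.
Proof. by rewrite code_uvE code_dim_syndrome_onto ?dim_L //; exact: syndrome_code_uv_onto. Qed.

Lemma code_uv_min_dist : min_dist_is C 4.
Proof.
split.
  have [c [cC c0 c4]] := exists_code_uv_weight_le4.
  exists c, 0; split => //; first by rewrite code_uvE inE linear0.
  by apply/eqP; rewrite eqn_leq hamming_supp subr0 c4 code_uv_weight_ge4.
move=> c d cC dC cd; rewrite hamming_supp; apply: code_uv_weight_ge4; first exact: code_uvB.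
by rewrite subr_eq0.
Qed.

End Code.

Theorem theorem1 (l : nat) (F : finFieldType) (pi : F) :
  (1 <= l)%N ->
  #|F| = (3 ^ (2 * l + 1))%N ->
  (3 ^ (2 * l + 1)).-1.-primitive_root pi ->
  let m := (2 * l + 1)%N in
  let u := ((3 ^ m + 1) %/ 2)%N in
  let v := (2 * 3 ^ l + 1)%N in
  let n := (3 ^ m).-1 in
  ~ conjugate3 (pi ^+ u) (pi ^+ v) /\
  code_dim (code_uv n pi u v) = (n - 2 * m)%N /\
  min_dist_is (code_uv n pi u v) 4.
Proof.
move=> l_gt0 cardF pi_prim m u v n.
split; first exact: not_conjugate_uv.
split; first exact: code_uv_dim.
exact: code_uv_min_dist.
Qed.
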